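(* Let $Q_1,Q_2\ge 1$ be integers, $\lambda_1,\lambda_2>0$, $p_{12},p_{21}\in[0,1]$, and set $s=\lambda_1+\lambda_2$, $s_1=\lambda_1+\lambda_2p_{21}$, $s_2=\lambda_2+\lambda_1p_{12}$. Let $\{(n_1(t),n_2(t)):t\ge 0\}$ be the inventory CTMC (defined in the context) started at $(n_1(0),n_2(0))=(Q_1,Q_2)$, and let $p_{(j_1,j_2)}(t)=P(n_1(t)=j_1,n_2(t)=j_2)$. Then for every $t\ge 0$: (a) for $1\le j_1\le Q_1$, $1\le j_2\le Q_2$, with $N=Q_1+Q_2-j_1-j_2$, $$p_{(j_1,j_2)}(t)=e^{-st}\frac{(st)^{N}}{N!}\binom{N}{Q_1-j_1}\Big(\frac{\lambda_1}{s}\Big)^{Q_1-j_1}\Big(\frac{\lambda_2}{s}\Big)^{Q_2-j_2};$$ (b) for $1\le j_1\le Q_1$, $$p_{(j_1,0)}(t)=\sum_{k=Q_1+Q_2-j_1}^{\infty}e^{-st}\frac{(st)^k}{k!}\sum_{l=Q_2}^{Q_1+Q_2-j_1}\binom{l-1}{Q_2-1}\Big(\frac{\lambda_2}{s}\Big)^{Q_2}\Big(\frac{\lambda_1}{s}\Big)^{l-Q_2}\binom{k-l}{Q_1+Q_2-j_1-l}\Big(\frac{s_1}{s}\Big)^{Q_1+Q_2-j_1-l}\Big(\frac{s-s_1}{s}\Big)^{k-Q_1-Q_2+j_1};$$ (c) for $1\le j_2\le Q_2$, $$p_{(0,j_2)}(t)=\sum_{k=Q_1+Q_2-j_2}^{\infty}e^{-st}\frac{(st)^k}{k!}\sum_{l=Q_1}^{Q_1+Q_2-j_2}\binom{l-1}{Q_1-1}\Big(\frac{\lambda_1}{s}\Big)^{Q_1}\Big(\frac{\lambda_2}{s}\Big)^{l-Q_1}\binom{k-l}{Q_1+Q_2-j_2-l}\Big(\frac{s_2}{s}\Big)^{Q_1+Q_2-j_2-l}\Big(\frac{s-s_2}{s}\Big)^{k-Q_1-Q_2+j_2};$$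 (d) $p_{(0,0)}(t)=1-\sum_{(j_1,j_2)\neq(0,0)}p_{(j_1,j_2)}(t)$.
   Context: Two products; customers wanting product $i$ arrive as independent Poisson processes of rate $\lambda_i$; a customer who wants product $i$ and finds it out of stock while product $j\ne i$ is in stock buys one unit of $j$ with probability $p_{ij}$ (otherwise the sale is lost). The inventory CTMC $\{(n_1(t),n_2(t))\}$ (with initial stock $(Q_1,Q_2)$, no replenishment) has state space $\{0,\dots,Q_1\}\times\{0,\dots,Q_2\}$ and transition rates: from $(i_1,i_2)$ with $i_1,i_2\ge1$, to $(i_1-1,i_2)$ at rate $\lambda_1$ and to $(i_1,i_2-1)$ at rate $\lambda_2$; from $(i_1,0)$ with $i_1\ge 1$, to $(i_1-1,0)$ at rate $s_1=\lambda_1+\lambda_2p_{21}$; from $(0,i_2)$ with $i_2\ge1$, to $(0,i_2-1)$ at rate $s_2=\lambda_2+\lambda_1p_{12}$; $(0,0)$ is absorbing. Here $s=\lambda_1+\lambda_2$. *)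

From Stdlib Require Import Reals Lra Arith Bool.
Open Scope R_scope.

(* Transition rate q((i1,i2) -> (j1,j2)) of the inventory CTMC (off-diagonal). *)
Definition rate (l1 l2 p12 p21 : R) (i1 i2 j1 j2 : nat) : R :=
  let s1 := l1 + l2 * p21 in
  let s2 := l2 + l1 * p12 in
  match i1, i2 with
  | S a1, S a2 =>
      if Nat.eqb j1 a1 && Nat.eqb j2 i2 then l1
      else if Nat.eqb j1 i1 && Nat.eqb j2 a2 then l2 else 0
  | S a1, O => if Nat.eqb j1 a1 && Nat.eqb j2 0 then s1 else 0
  | O, S a2 => if Nat.eqb j1 0 && Nat.eqb j2 a2 then s2 else 0
  | O, O => 0
  end.

Definition state_sum (Q1 Q2 : nat) (f : nat -> nat -> R) : R :=
  sum_f_R0 (fun i1 => sum_f_R0 (fun i2 => f i1 i2) Q2) Q1.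

Definition out_rate (Q1 Q2 : nat) (l1 l2 p12 p21 : R) (i1 i2 : nat) : R :=
  state_sum Q1 Q2 (fun j1 j2 => rate l1 l2 p12 p21 i1 i2 j1 j2).

(* p : j1 -> j2 -> t -> P(n1(t)=j1, n2(t)=j2) is the transient distribution of
   the CTMC started at (Q1,Q2): the solution on [0,oo) of the Kolmogorov forward
   equations with initial condition delta_(Q1,Q2), continuous at 0 from the right. *)
Definition is_transient_distribution (Q1 Q2 : nat) (l1 l2 p12 p21 : R)
    (p : nat -> nat -> R -> R) : Prop :=
  (forall j1 j2, (j1 <= Q1)%nat -> (j2 <= Q2)%nat ->
     p j1 j2 0 = if Nat.eqb j1 Q1 && Nat.eqb j2 Q2 then 1 else 0) /\
  (forall j1 j2, (j1 <= Q1)%nat -> (j2 <= Q2)%nat ->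
     forall eps, 0 < eps -> exists delta, 0 < delta /\
       forall h, 0 <= h < delta -> Rabs (p j1 j2 h - p j1 j2 0) < eps) /\
  (forall j1 j2, (j1 <= Q1)%nat -> (j2 <= Q2)%nat ->
     forall t, 0 < t ->
       derivable_pt_lim (p j1 j2) t
         (state_sum Q1 Q2 (fun i1 i2 => p i1 i2 t * rate l1 l2 p12 p21 i1 i2 j1 j2)
          - p j1 j2 t * out_rate Q1 Q2 l1 l2 p12 p21 j1 j2)).

(* Uniformize at rate s = l1 + l2, which bounds every exit rate.  Let pi_k be the law after
   k steps of the jump chain with transition matrix I + Q/s started at (Q1, Q2).  The Poisson
   mixture sum_k e^(-st) (st)^k / k! pi_k solves the Kolmogorov forward equations, and their
   solution is unique because every jump lowers j1 + j2, so they can be integrated level by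
   level.  Inside the quadrant the jump chain steps left with probability l1/s and down with
   probability l2/s, so pi_k is binomial there, which gives (a).  It enters the axis j2 = 0 at
   (Q1 - i, 0) at step Q2 + i with negative binomial probability, and afterwards steps left
   with probability s1/s and stays put otherwise, which gives the double sum (b).  Exchanging
   the two products turns (b) into (c), and (d) is conservation of mass. *)

From Stdlib Require Import Reals Arith Bool Lra Lia.
From Coquelicot Require Import Coquelicot.
From Stdlib Require Import Binomial.
Open Scope R_scope.

(** * Finite sums over the grid *)

Lemma sum_f_R0_indicator (g : nat -> R) (a N : nat) :
  sum_f_R0 (fun i => if Nat.eqb i a then g i else 0) N = if Nat.leb a N then g a else 0.
Proof.
  induction N as [|N IH]; cbn [sum_f_R0].
  - destruct (Nat.eqb_spec 0 a), (Nat.leb_spec a 0); subst; try lia; reflexivity.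
  - rewrite IH. destruct (Nat.eqb_spec (S N) a), (Nat.leb_spec a N), (Nat.leb_spec a (S N));
      subst; try lia; lra.
Qed.

Lemma sum_f_R0_comm (f : nat -> nat -> R) N M :
  sum_f_R0 (fun a => sum_f_R0 (fun b => f a b) M) N =
  sum_f_R0 (fun b => sum_f_R0 (fun a => f a b) N) M.
Proof.
  induction N as [|N IH]; cbn [sum_f_R0]; [reflexivity|].
  rewrite IH, <- sum_plus. reflexivity.
Qed.

Lemma sum_f_R0_ge0 (f : nat -> R) N :
  (forall i, (i <= N)%nat -> 0 <= f i) -> 0 <= sum_f_R0 f N.
Proof.
  intros Hf. rewrite <- (Rmult_0_l (INR (S N))), <- sum_cte.
  apply sum_Rle. exact Hf.
Qed.

Lemma sum_f_R0_ge_term (f : nat -> R) N a :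
  (forall i, (i <= N)%nat -> 0 <= f i) -> (a <= N)%nat -> f a <= sum_f_R0 f N.
Proof.
  intros Hf Ha. induction N as [|N IH]; cbn [sum_f_R0].
  - replace a with 0%nat by lia. lra.
  - destruct (Nat.eq_dec a (S N)) as [->|Hne].
    + assert (0 <= sum_f_R0 f N) by (apply sum_f_R0_ge0; auto). lra.
    + assert (f a <= sum_f_R0 f N) by (apply IH; auto; lia).
      assert (0 <= f (S N)) by auto. lra.
Qed.

Section StateSum.
Variables Q1 Q2 : nat.

Lemma state_sum_ext f g :
  (forall i1 i2, (i1 <= Q1)%nat -> (i2 <= Q2)%nat -> f i1 i2 = g i1 i2) ->
  state_sum Q1 Q2 f = state_sum Q1 Q2 g.
Proof. intros H; apply sum_eq; intros; apply sum_eq; auto. Qed.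

Lemma state_sum_plus f g :
  state_sum Q1 Q2 (fun i1 i2 => f i1 i2 + g i1 i2) = state_sum Q1 Q2 f + state_sum Q1 Q2 g.
Proof.
  unfold state_sum. rewrite <- sum_plus. apply sum_eq; intros. apply sum_plus.
Qed.

Lemma state_sum_mult_r f c :
  state_sum Q1 Q2 (fun i1 i2 => f i1 i2 * c) = state_sum Q1 Q2 f * c.
Proof.
  unfold state_sum. rewrite Rmult_comm, scal_sum. apply sum_eq; intros.
  rewrite Rmult_comm, scal_sum. reflexivity.
Qed.

Lemma state_sum_indicator (f : nat -> nat -> R) a b :
  state_sum Q1 Q2 (fun i1 i2 => if Nat.eqb i1 a && Nat.eqb i2 b then f i1 i2 else 0)
  = if Nat.leb a Q1 && Nat.leb b Q2 then f a b else 0.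
Proof.
  unfold state_sum.
  rewrite (sum_eq _ (fun i1 => if Nat.eqb i1 a then (if Nat.leb b Q2 then f i1 b else 0) else 0)).
  - rewrite sum_f_R0_indicator. destruct (Nat.leb a Q1); reflexivity.
  - intros i1 _. destruct (Nat.eqb i1 a); cbn [andb].
    + apply (sum_f_R0_indicator (f i1)).
    + rewrite sum_cte. ring.
Qed.

Lemma state_sum_comm (g : nat -> nat -> nat -> nat -> R) :
  state_sum Q1 Q2 (fun i1 i2 => state_sum Q1 Q2 (fun j1 j2 => g i1 i2 j1 j2)) =
  state_sum Q1 Q2 (fun j1 j2 => state_sum Q1 Q2 (fun i1 i2 => g i1 i2 j1 j2)).
Proof.
  unfold state_sum.
  rewrite (sum_eq _ (fun i1 => sum_f_R0 (fun j1 => sum_f_R0 (fun i2 =>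
       sum_f_R0 (fun j2 => g i1 i2 j1 j2) Q2) Q2) Q1))
    by (intros; apply sum_f_R0_comm).
  rewrite sum_f_R0_comm. apply sum_eq; intros j1 _.
  rewrite (sum_eq _ (fun i1 => sum_f_R0 (fun j2 => sum_f_R0 (fun i2 => g i1 i2 j1 j2) Q2) Q2))
    by (intros; apply sum_f_R0_comm).
  apply sum_f_R0_comm.
Qed.

Lemma state_sum_ge0 f :
  (forall i1 i2, (i1 <= Q1)%nat -> (i2 <= Q2)%nat -> 0 <= f i1 i2) -> 0 <= state_sum Q1 Q2 f.
Proof. intros H; apply sum_f_R0_ge0; intros; apply sum_f_R0_ge0; auto. Qed.

Lemma state_sum_ge_term f a b :
  (forall i1 i2, (i1 <= Q1)%nat -> (i2 <= Q2)%nat -> 0 <= f i1 i2) ->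
  (a <= Q1)%nat -> (b <= Q2)%nat -> f a b <= state_sum Q1 Q2 f.
Proof.
  intros H Ha Hb.
  apply Rle_trans with (sum_f_R0 (f a) Q2).
  - apply sum_f_R0_ge_term; auto.
  - apply (sum_f_R0_ge_term (fun i1 => sum_f_R0 (f i1) Q2)); auto.
    intros; apply sum_f_R0_ge0; auto.
Qed.

Lemma is_series_state_sum (f : nat -> nat -> nat -> R) (l : nat -> nat -> R) :
  (forall i1 i2, (i1 <= Q1)%nat -> (i2 <= Q2)%nat -> is_series (f i1 i2) (l i1 i2)) ->
  is_series (fun n => state_sum Q1 Q2 (fun i1 i2 => f i1 i2 n)) (state_sum Q1 Q2 l).
Proof.
  assert (Hsum : forall (g : nat -> nat -> R) (m : nat -> R) N,
    (forall i, (i <= N)%nat -> is_series (g i) (m i)) ->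
    is_series (fun n => sum_f_R0 (fun i => g i n) N) (sum_f_R0 m N)).
  { intros g m N; induction N as [|N IH]; intros Hg; cbn [sum_f_R0]; auto.
    apply (is_series_plus (fun n => sum_f_R0 (fun i => g i n) N) (g (S N))); auto. }
  intros H. apply (Hsum (fun i1 n => sum_f_R0 (fun i2 => f i1 i2 n) Q2)).
  intros i1 Hi1. apply (Hsum (fun i2 => f i1 i2)). auto.
Qed.

End StateSum.

Lemma state_sum_transpose Q1 Q2 (f : nat -> nat -> R) :
  state_sum Q2 Q1 (fun i2 i1 => f i1 i2) = state_sum Q1 Q2 f.
Proof. apply sum_f_R0_comm. Qed.

(** * Series and linear differential equations *)

Lemma is_series_drop_zeros (u : nat -> R) l M :
  is_series u l -> (forall n, (n < M)%nat -> u n = 0) -> is_series (fun m => u (m + M)%nat) l.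
Proof.
  intros Hu Hz.
  assert (Hex : ex_series (fun m => u (M + m)%nat)) by (apply ex_series_incr_n; eexists; exact Hu).
  apply (is_series_ext (fun m => u (M + m)%nat)); [intros; f_equal; lia|].
  rewrite <- (is_series_unique _ _ Hu), (Series_incr_n_aux u M Hz).
  apply Series_correct, Hex.
Qed.

Lemma is_series_single_term (u : nat -> R) l M :
  is_series u l -> (forall n, n <> M -> u n = 0) -> l = u M.
Proof.
  intros Hu Hz.
  apply is_series_drop_zeros with (M := M) in Hu; [|intros; apply Hz; lia].
  rewrite <- (is_series_unique _ _ Hu), Series_incr_1 by (eexists; exact Hu).
  rewrite (Series_ext _ (fun k => u (S k + M)%nat * 0)) by (intros; rewrite Hz by lia; ring).
  rewrite Series_scal_r. cbn. ring.
Qed.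

Definition right_continuous_at_0 (f : R -> R) : Prop :=
  forall eps, 0 < eps -> exists delta, 0 < delta /\
    forall h, 0 <= h < delta -> Rabs (f h - f 0) < eps.

Lemma right_continuous_at_0_minus f g :
  right_continuous_at_0 f -> right_continuous_at_0 g ->
  right_continuous_at_0 (fun x => f x - g x).
Proof.
  intros Hf Hg eps Heps.
  destruct (Hf (eps / 2)) as [df [Hdf Hf']]; [lra|].
  destruct (Hg (eps / 2)) as [dg [Hdg Hg']]; [lra|].
  exists (Rmin df dg). split; [apply Rmin_pos; auto|]. intros h Hh.
  pose proof (Rmin_l df dg). pose proof (Rmin_r df dg).
  specialize (Hf' h ltac:(lra)). specialize (Hg' h ltac:(lra)).
  replace (f h - g h - (f 0 - g 0)) with ((f h - f 0) - (g h - g 0)) by ring.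
  eapply Rle_lt_trans; [apply Rabs_triang|]. rewrite Rabs_Ropp. lra.
Qed.

Lemma derivable_pt_lim_0_const (u : R -> R) :
  (forall x, 0 < x -> derivable_pt_lim u x 0) -> forall a t, 0 < a < t -> u t = u a.
Proof.
  intros Hu a t Hat.
  destruct (MVT_cor2 u (fun _ => 0) a t) as [x [Hx _]]; [lra| |lra].
  intros x Hx. apply Hu. lra.
Qed.

(* [d x * exp (c x)] is constant on [(0, oo)] and tends to [d 0 = 0] at [0+]. *)
Lemma linear_ode_zero (d : R -> R) (c : R) :
  d 0 = 0 -> right_continuous_at_0 d ->
  (forall t, 0 < t -> derivable_pt_lim d t (- (d t * c))) ->
  forall t, 0 <= t -> d t = 0.
Proof.
  intros Hd0 Hcont Hd t Ht.
  destruct (Req_dec t 0) as [->|Htn]; [exact Hd0|].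
  set (u := fun x => d x * exp (c * x)).
  assert (Hconst : forall a, 0 < a < t -> u t = u a).
  { intros a Ha. apply (derivable_pt_lim_0_const u); [|exact Ha]. intros x Hx.
    replace 0 with (- (d x * c) * exp (c * x) + d x * (c * exp (c * x))) by ring.
    apply (derivable_pt_lim_mult d (fun x => exp (c * x))); [apply Hd, Hx|].
    apply is_derive_Reals. auto_derive; [exact I|ring]. }
  assert (Hsmall : forall eps, 0 < eps -> Rabs (u t) <= eps * exp (Rabs c * t)).
  { intros eps Heps. destruct (Hcont eps Heps) as [delta [Hdelta Hclose]].
    set (a := Rmin delta t / 2).
    assert (Ha : 0 < a < t /\ a < delta).
    { pose proof (Rmin_l delta t). pose proof (Rmin_r delta t).
      assert (0 < Rmin delta t) by (apply Rmin_pos; lra). unfold a. lra. }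
    rewrite (Hconst a) by lra. unfold u.
    rewrite Rabs_mult, (Rabs_right (exp _)) by (left; apply exp_pos).
    apply Rmult_le_compat; try apply Rabs_pos; try (left; apply exp_pos).
    - specialize (Hclose a ltac:(lra)). rewrite Hd0, Rminus_0_r in Hclose. lra.
    - assert (Hca : c * a <= Rabs c * t).
      { pose proof (Rle_abs c). pose proof (Rabs_pos c). nra. }
      destruct (Rle_lt_or_eq_dec _ _ Hca) as [Hlt|Heq]; [left; apply exp_increasing, Hlt|].
      rewrite Heq. lra. }
  assert (Hut : u t = 0).
  { destruct (Req_dec (u t) 0) as [|Hne]; [assumption|exfalso].
    pose proof (Rabs_pos_lt _ Hne). pose proof (exp_pos (Rabs c * t)).
    assert (Heps : 0 < Rabs (u t) / (2 * exp (Rabs c * t))) by (apply Rdiv_lt_0_compat; lra).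
    specialize (Hsmall _ Heps).
    replace (Rabs (u t) / (2 * exp (Rabs c * t)) * exp (Rabs c * t)) with (Rabs (u t) / 2)
      in Hsmall by (field; lra).
    lra. }
  unfold u in Hut. apply Rmult_integral in Hut as [Hdt|He]; [exact Hdt|].
  pose proof (exp_pos (c * t)). lra.
Qed.

Lemma linear_ode_unique (g f h : R -> R) (c : R) :
  g 0 = f 0 -> right_continuous_at_0 g -> right_continuous_at_0 f ->
  (forall t, 0 < t -> derivable_pt_lim g t (h t - g t * c)) ->
  (forall t, 0 < t -> derivable_pt_lim f t (h t - f t * c)) ->
  forall t, 0 <= t -> g t = f t.
Proof.
  intros H0 Hg Hf Dg Df t Ht.
  apply Rminus_diag_uniq.
  apply (linear_ode_zero (fun x => g x - f x) c);
    [lra|apply right_continuous_at_0_minus; auto| |lra].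
  intros x Hx. replace (- ((g x - f x) * c)) with ((h x - g x * c) - (h x - f x * c)) by ring.
  apply derivable_pt_lim_minus; auto.
Qed.

Lemma exp_dominated_radius (a : nat -> R) (K : R) :
  0 <= K -> (forall n, Rabs (a n) <= K ^ n / INR (fact n)) ->
  forall x, Rbar_lt (Rabs x) (CV_radius a).
Proof.
  intros HK Ha x.
  assert (Hdisk : forall r, CV_disk a r).
  { intros r. apply (@ex_series_le R_AbsRing R_CompleteNormedModule _
      (fun n => / INR (fact n) * (K * Rabs r) ^ n)).
    - intros n. change (norm ?y) with (Rabs y).
      rewrite Rabs_Rabsolu, Rabs_mult, <- RPow_abs, Rpow_mult_distr.
      replace (/ INR (fact n) * (K ^ n * Rabs r ^ n)) with (K ^ n / INR (fact n) * Rabs r ^ n)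
        by (unfold Rdiv; ring).
      apply Rmult_le_compat_r; [apply pow_le, Rabs_pos|apply Ha].
    - exists (exp (K * Rabs r)).
      eapply is_series_ext; [|exact (is_exp_Reals (K * Rabs r))].
      intros n. cbn. rewrite pow_n_pow. apply Rmult_comm. }
  apply Rbar_lt_le_trans with (Finite (Rabs x + 1)); [cbn; lra|].
  apply (proj1 (Lub_Rbar_correct (CV_disk a))), Hdisk.
Qed.

(** * Uniformization *)

Section Uniformization.
Variables (Q1 Q2 : nat) (q : nat -> nat -> nat -> nat -> R) (s : R).
Hypotheses (s_pos : 0 < s) (q_ge0 : forall i1 i2 j1 j2, 0 <= q i1 i2 j1 j2)
  (exit_rate_le : forall i1 i2, (i1 <= Q1)%nat -> (i2 <= Q2)%nat ->
     state_sum Q1 Q2 (q i1 i2) <= s).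

Definition jump_prob (i1 i2 j1 j2 : nat) : R :=
  q i1 i2 j1 j2 / s
  + (if Nat.eqb i1 j1 && Nat.eqb i2 j2 then 1 - state_sum Q1 Q2 (q j1 j2) / s else 0).

Fixpoint jump_dist (k j1 j2 : nat) : R :=
  match k with
  | O => if Nat.eqb j1 Q1 && Nat.eqb j2 Q2 then 1 else 0
  | S k => state_sum Q1 Q2 (fun i1 i2 => jump_dist k i1 i2 * jump_prob i1 i2 j1 j2)
  end.

Lemma state_sum_jump_prob (f : nat -> nat -> R) j1 j2 :
  (j1 <= Q1)%nat -> (j2 <= Q2)%nat ->
  state_sum Q1 Q2 (fun i1 i2 => f i1 i2 * jump_prob i1 i2 j1 j2) =
  (state_sum Q1 Q2 (fun i1 i2 => f i1 i2 * q i1 i2 j1 j2)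
   + f j1 j2 * (s - state_sum Q1 Q2 (q j1 j2))) / s.
Proof.
  intros Hj1 Hj2. unfold jump_prob.
  rewrite (state_sum_ext _ _ _ (fun i1 i2 => f i1 i2 * q i1 i2 j1 j2 * / s
     + (if Nat.eqb i1 j1 && Nat.eqb i2 j2 then f i1 i2 * (1 - state_sum Q1 Q2 (q j1 j2) / s)
        else 0))) by (intros; destruct (_ && _); unfold Rdiv; ring).
  rewrite state_sum_plus, state_sum_mult_r, state_sum_indicator.
  rewrite (proj2 (Nat.leb_le _ _) Hj1), (proj2 (Nat.leb_le _ _) Hj2). cbn [andb].
  field. lra.
Qed.

Lemma jump_prob_ge0 i1 i2 j1 j2 :
  (i1 <= Q1)%nat -> (i2 <= Q2)%nat -> 0 <= jump_prob i1 i2 j1 j2.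
Proof.
  intros Hi1 Hi2. unfold jump_prob.
  assert (0 <= q i1 i2 j1 j2 / s) by (apply Rdiv_le_0_compat; auto).
  destruct (Nat.eqb_spec i1 j1), (Nat.eqb_spec i2 j2); cbn [andb]; try lra. subst.
  assert (state_sum Q1 Q2 (q j1 j2) / s <= 1)
    by (apply Rcomplements.Rle_div_l; [lra|rewrite Rmult_1_l; auto]).
  lra.
Qed.

Lemma jump_prob_row_sum i1 i2 :
  (i1 <= Q1)%nat -> (i2 <= Q2)%nat -> state_sum Q1 Q2 (jump_prob i1 i2) = 1.
Proof.
  intros Hi1 Hi2. unfold jump_prob. rewrite state_sum_plus.
  unfold Rdiv at 1. rewrite state_sum_mult_r.
  rewrite (state_sum_ext _ _
     (fun j1 j2 => if Nat.eqb i1 j1 && Nat.eqb i2 j2 then 1 - state_sum Q1 Q2 (q j1 j2) / s else 0)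
     (fun j1 j2 => if Nat.eqb j1 i1 && Nat.eqb j2 i2 then 1 - state_sum Q1 Q2 (q j1 j2) / s else 0))
    by (intros; rewrite (Nat.eqb_sym i1), (Nat.eqb_sym i2); reflexivity).
  rewrite state_sum_indicator.
  rewrite (proj2 (Nat.leb_le _ _) Hi1), (proj2 (Nat.leb_le _ _) Hi2). cbn [andb].
  field. lra.
Qed.

Lemma jump_dist_ge0 k j1 j2 : 0 <= jump_dist k j1 j2.
Proof.
  revert j1 j2; induction k as [|k IH]; intros; cbn [jump_dist].
  - destruct (_ && _); lra.
  - apply state_sum_ge0. intros. apply Rmult_le_pos; [apply IH|apply jump_prob_ge0; auto].
Qed.

Lemma jump_dist_total k : state_sum Q1 Q2 (jump_dist k) = 1.
Proof.
  induction k as [|k IH]; cbn [jump_dist].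
  - rewrite (state_sum_indicator Q1 Q2 (fun _ _ => 1)), !Nat.leb_refl. reflexivity.
  - rewrite <- state_sum_comm, <- IH. apply state_sum_ext. intros i1 i2 Hi1 Hi2.
    rewrite (state_sum_ext _ _ _ (fun j1 j2 => jump_prob i1 i2 j1 j2 * jump_dist k i1 i2))
      by (intros; ring).
    rewrite state_sum_mult_r, jump_prob_row_sum; auto; ring.
Qed.

Lemma jump_dist_le1 k j1 j2 : (j1 <= Q1)%nat -> (j2 <= Q2)%nat -> jump_dist k j1 j2 <= 1.
Proof.
  intros. rewrite <- (jump_dist_total k).
  apply state_sum_ge_term; auto. intros; apply jump_dist_ge0.
Qed.

Lemma jump_dist_outside k j1 j2 :
  (forall i1 i2, (i1 <= Q1)%nat -> (i2 <= Q2)%nat -> q i1 i2 j1 j2 = 0) ->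
  (Q1 < j1 \/ Q2 < j2)%nat -> jump_dist k j1 j2 = 0.
Proof.
  intros Hq Hj. destruct k as [|k]; cbn [jump_dist].
  - destruct (Nat.eqb_spec j1 Q1), (Nat.eqb_spec j2 Q2); cbn [andb]; lia || reflexivity.
  - rewrite <- (Rmult_0_l (INR (S Q1))), <- sum_cte. apply sum_eq. intros i1 Hi1.
    rewrite <- (Rmult_0_l (INR (S Q2))), <- sum_cte. apply sum_eq. intros i2 Hi2.
    unfold jump_prob. rewrite Hq by assumption.
    destruct (Nat.eqb_spec i1 j1), (Nat.eqb_spec i2 j2); cbn [andb]; try lia; lra.
Qed.

Definition poisson_coeff (j1 j2 n : nat) : R := s ^ n / INR (fact n) * jump_dist n j1 j2.

(* [sum_n exp (- s t) (s t)^n / n! * jump_dist n j1 j2], written as a power series in [t]. *)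
Definition uniformized (j1 j2 : nat) (t : R) : R :=
  exp (- (s * t)) * PSeries (poisson_coeff j1 j2) t.

Lemma poisson_coeff_radius j1 j2 x :
  (j1 <= Q1)%nat -> (j2 <= Q2)%nat -> Rbar_lt (Rabs x) (CV_radius (poisson_coeff j1 j2)).
Proof.
  intros Hj1 Hj2. apply (exp_dominated_radius _ s); [lra|]. intros n.
  pose proof (jump_dist_ge0 n j1 j2). pose proof (jump_dist_le1 n j1 j2 Hj1 Hj2).
  assert (0 <= s ^ n / INR (fact n))
    by (apply Rdiv_le_0_compat; [apply pow_le; lra|apply INR_fact_lt_0]).
  unfold poisson_coeff. rewrite Rabs_right by (apply Rle_ge, Rmult_le_pos; assumption).
  rewrite <- Rmult_1_r. apply Rmult_le_compat_l; assumption.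
Qed.

Lemma uniformized_series j1 j2 t : (j1 <= Q1)%nat -> (j2 <= Q2)%nat ->
  is_series (fun n => exp (- (s * t)) * (s * t) ^ n / INR (fact n) * jump_dist n j1 j2)
    (uniformized j1 j2 t).
Proof.
  intros Hj1 Hj2.
  pose proof (PSeries_correct _ _ (CV_radius_inside _ _ (poisson_coeff_radius j1 j2 t Hj1 Hj2)))
    as Hps.
  eapply is_series_ext; [|exact (is_series_scal (exp (- (s * t))) _ _ Hps)].
  intros n. cbn. rewrite pow_n_pow. unfold poisson_coeff. rewrite Rpow_mult_distr.
  unfold Rdiv. ring.
Qed.

Lemma uniformized_0 j1 j2 : uniformized j1 j2 0 = jump_dist 0 j1 j2.
Proof.
  unfold uniformized. rewrite PSeries_0, Rmult_0_r, Ropp_0, exp_0.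
  unfold poisson_coeff. cbn. field.
Qed.

Lemma PSeries_PS_derive_poisson_coeff j1 j2 t : (j1 <= Q1)%nat -> (j2 <= Q2)%nat ->
  PSeries (PS_derive (poisson_coeff j1 j2)) t
  = s * state_sum Q1 Q2 (fun i1 i2 => PSeries (poisson_coeff i1 i2) t * jump_prob i1 i2 j1 j2).
Proof.
  intros Hj1 Hj2. apply is_pseries_unique.
  assert (Hs : is_series (fun n => state_sum Q1 Q2 (fun i1 i2 =>
      t ^ n * poisson_coeff i1 i2 n * jump_prob i1 i2 j1 j2))
    (state_sum Q1 Q2 (fun i1 i2 => PSeries (poisson_coeff i1 i2) t * jump_prob i1 i2 j1 j2))).
  { apply is_series_state_sum. intros i1 i2 Hi1 Hi2. apply is_series_scal_r.
    eapply is_series_ext;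
      [|exact (PSeries_correct _ _ (CV_radius_inside _ _ (poisson_coeff_radius i1 i2 t Hi1 Hi2)))].
    intros n. cbn. rewrite pow_n_pow. reflexivity. }
  eapply is_series_ext; [|exact (is_series_scal s _ _ Hs)].
  intros n. rewrite pow_n_pow. cbn. unfold PS_derive, poisson_coeff. cbn [jump_dist].
  rewrite (state_sum_ext _ _ _ (fun i1 i2 => jump_dist n i1 i2 * jump_prob i1 i2 j1 j2
      * (t ^ n * (s ^ n / INR (fact n))))) by (intros; unfold poisson_coeff; ring).
  rewrite state_sum_mult_r, fact_simpl, mult_INR. cbn [pow].
  field. split; [apply INR_fact_neq_0|apply not_0_INR; lia].
Qed.

Lemma uniformized_forward j1 j2 t : (j1 <= Q1)%nat -> (j2 <= Q2)%nat ->
  derivable_pt_lim (uniformized j1 j2) t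
    (state_sum Q1 Q2 (fun i1 i2 => uniformized i1 i2 t * q i1 i2 j1 j2)
     - uniformized j1 j2 t * state_sum Q1 Q2 (q j1 j2)).
Proof.
  intros Hj1 Hj2.
  replace (_ - _) with (- s * exp (- (s * t)) * PSeries (poisson_coeff j1 j2) t
                        + exp (- (s * t)) * PSeries (PS_derive (poisson_coeff j1 j2)) t).
  - apply (derivable_pt_lim_mult (fun t => exp (- (s * t))) (PSeries (poisson_coeff j1 j2))).
    + apply is_derive_Reals. auto_derive; [exact I|ring].
    + apply is_derive_Reals, is_derive_PSeries, poisson_coeff_radius; assumption.
  - rewrite PSeries_PS_derive_poisson_coeff, !state_sum_jump_prob by assumption.
    unfold uniformized.
    rewrite (state_sum_ext _ _
      (fun i1 i2 => exp (- (s * t)) * PSeries (poisson_coeff i1 i2) t * q i1 i2 j1 j2)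
      (fun i1 i2 => PSeries (poisson_coeff i1 i2) t * q i1 i2 j1 j2 * exp (- (s * t))))
      by (intros; ring).
    rewrite state_sum_mult_r. field. lra.
Qed.

Lemma uniformized_right_continuous j1 j2 : (j1 <= Q1)%nat -> (j2 <= Q2)%nat ->
  right_continuous_at_0 (uniformized j1 j2).
Proof.
  intros Hj1 Hj2 eps Heps.
  destruct (derivable_continuous_pt _ _ (exist _ _ (uniformized_forward j1 j2 0 Hj1 Hj2))
    eps Heps) as [delta [Hdelta Hclose]].
  exists delta. split; [exact Hdelta|]. intros h Hh.
  destruct (Req_dec h 0) as [->|Hne]; [rewrite Rminus_eq_0, Rabs_R0; exact Heps|].
  apply Hclose. split; [split; [exact I|auto]|].
  cbn. unfold R_dist. rewrite Rminus_0_r, Rabs_right; lra.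
Qed.

Lemma uniformized_total t : state_sum Q1 Q2 (fun j1 j2 => uniformized j1 j2 t) = 1.
Proof.
  set (w := fun n => exp (- (s * t)) * (s * t) ^ n / INR (fact n)).
  assert (Hmass : is_series w (state_sum Q1 Q2 (fun j1 j2 => uniformized j1 j2 t))).
  { eapply is_series_ext;
      [|exact (is_series_state_sum _ _ _ _
                 (fun j1 j2 Hj1 Hj2 => uniformized_series j1 j2 t Hj1 Hj2))].
    intros n. cbv beta. rewrite state_sum_ext with (g := fun j1 j2 => jump_dist n j1 j2 * w n)
      by (intros; unfold w; ring).
    rewrite state_sum_mult_r, jump_dist_total. apply Rmult_1_l. }
  assert (Hexp : is_series w (exp (- (s * t)) * exp (s * t))).
  { eapply is_series_ext; [|exact (is_series_scal (exp (- (s * t))) _ _ (is_exp_Reals (s * t)))].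
    intros n. cbn. rewrite pow_n_pow. unfold w, Rdiv. ring. }
  rewrite <- exp_plus, Rplus_opp_l, exp_0 in Hexp.
  rewrite <- (is_series_unique _ _ Hmass). exact (is_series_unique _ _ Hexp).
Qed.

Definition forward_solution (p : nat -> nat -> R -> R) : Prop :=
  (forall j1 j2, (j1 <= Q1)%nat -> (j2 <= Q2)%nat ->
     p j1 j2 0 = if Nat.eqb j1 Q1 && Nat.eqb j2 Q2 then 1 else 0) /\
  (forall j1 j2, (j1 <= Q1)%nat -> (j2 <= Q2)%nat -> right_continuous_at_0 (p j1 j2)) /\
  (forall j1 j2, (j1 <= Q1)%nat -> (j2 <= Q2)%nat -> forall t, 0 < t ->
     derivable_pt_lim (p j1 j2) t
       (state_sum Q1 Q2 (fun i1 i2 => p i1 i2 t * q i1 i2 j1 j2)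
        - p j1 j2 t * state_sum Q1 Q2 (q j1 j2))).

(* Since jumps lower [j1 + j2], the forward equation of a state involves, besides the state
   itself, only states of higher level: the equations can be solved level by level. *)
Lemma forward_solution_uniformized (p : nat -> nat -> R -> R) :
  (forall i1 i2 j1 j2, q i1 i2 j1 j2 <> 0 -> (j1 + j2 < i1 + i2)%nat) ->
  forward_solution p ->
  forall j1 j2, (j1 <= Q1)%nat -> (j2 <= Q2)%nat ->
  forall t, 0 <= t -> p j1 j2 t = uniformized j1 j2 t.
Proof.
  intros Hlevel [Hp0 [Hcont Hderiv]].
  enough (Hn : forall n j1 j2, (j1 <= Q1)%nat -> (j2 <= Q2)%nat -> (Q1 + Q2 < n + j1 + j2)%nat ->
            forall t, 0 <= t -> p j1 j2 t = uniformized j1 j2 t)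
    by (intros j1 j2 Hj1 Hj2; apply (Hn (S (Q1 + Q2))); auto; lia).
  induction n as [|n IH]; intros j1 j2 Hj1 Hj2 Hn; [lia|].
  apply (linear_ode_unique _ _ (fun t => state_sum Q1 Q2 (fun i1 i2 => p i1 i2 t * q i1 i2 j1 j2))
           (state_sum Q1 Q2 (q j1 j2))).
  - rewrite uniformized_0, Hp0 by assumption. reflexivity.
  - apply Hcont; assumption.
  - apply uniformized_right_continuous; assumption.
  - intros t Ht. apply Hderiv; assumption.
  - intros t Ht.
    rewrite (state_sum_ext _ _ _ (fun i1 i2 => uniformized i1 i2 t * q i1 i2 j1 j2)).
    + apply uniformized_forward; assumption.
    + intros i1 i2 Hi1 Hi2.
      destruct (Req_dec (q i1 i2 j1 j2) 0) as [->|Hq]; [ring|].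
      specialize (Hlevel _ _ _ _ Hq). rewrite IH by (auto; lia || lra). reflexivity.
Qed.

End Uniformization.

(** * Binomial and boundary masses *)

Section BinomialMass.
Variables x y : R.

Definition binomial_mass (A B k : nat) : R :=
  if Nat.eqb k (A + B) then C (A + B) A * x ^ A * y ^ B else 0.

Lemma binomial_mass_succ A B k :
  binomial_mass A B (S k) =
  (match A with O => 0 | S A' => x * binomial_mass A' B k end)
  + (match B with O => 0 | S B' => y * binomial_mass A B' k end).
Proof.
  unfold binomial_mass. destruct A as [|a], B as [|b]; cbn [Nat.add Nat.eqb].
  - ring.
  - rewrite !C_n_0. destruct (Nat.eqb k b); cbn [pow]; ring.
  - rewrite !Nat.add_0_r, !C_n_n. destruct (Nat.eqb k a); cbn [pow]; ring.
  - rewrite <- (pascal (a + S b) a) by lia. replace (S (a + b)) with (a + S b)%nat by lia.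
    destruct (Nat.eqb k (a + S b)); cbn [pow]; ring.
Qed.

End BinomialMass.

Section BoundaryMass.
Variables (x y : R) (h : nat -> R) (Q : nat).

Definition boundary_sum (r n : nat) : R :=
  sum_f_R0 (fun i => h i * C (n + (r - i)) (r - i) * x ^ (r - i)) r.

(* Mass at deficit [r] after [k] steps of a walk that enters at deficit [i] at step [Q + i]
   with weight [h i], and then lowers the deficit with probability [x] and keeps it with
   probability [y] at each step. *)
Definition boundary_mass (r k : nat) : R :=
  if Nat.leb (Q + r) k then boundary_sum r (k - Q - r) * y ^ (k - Q - r) else 0.

Lemma boundary_sum_0 r :
  boundary_sum r 0 = (match r with O => 0 | S r' => x * boundary_sum r' 0 end) + h r.
Proof.
  unfold boundary_sum. destruct r as [|r]; cbn [sum_f_R0].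
  - cbn. rewrite C_n_n. ring.
  - rewrite Nat.sub_diag, scal_sum, C_n_n. cbn [pow Nat.add]. f_equal; [|ring].
    apply sum_eq. intros i Hi. replace (S r - i)%nat with (S (r - i)) by lia.
    rewrite !C_n_n. cbn [pow]. ring.
Qed.

Lemma boundary_sum_succ r n :
  boundary_sum r (S n) = (match r with O => 0 | S r' => x * boundary_sum r' (S n) end)
                         + boundary_sum r n.
Proof.
  unfold boundary_sum. destruct r as [|r]; cbn [sum_f_R0].
  - rewrite !Nat.sub_0_r, !Nat.add_0_r, !C_n_0. ring.
  - rewrite Nat.sub_diag, !Nat.add_0_r, !C_n_0, scal_sum, <- Rplus_assoc, <- sum_plus.
    f_equal. apply sum_eq. intros i Hi. replace (S r - i)%nat with (S (r - i)) by lia.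
    replace (S n + S (r - i))%nat with (S (S n + (r - i))) by lia.
    rewrite <- (pascal (S n + (r - i)) (r - i)) by lia.
    replace (n + S (r - i))%nat with (S n + (r - i))%nat by lia.
    cbn [pow]. ring.
Qed.

Lemma boundary_mass_succ r k :
  boundary_mass r (S k) =
  (match r with O => 0 | S r' => x * boundary_mass r' k end)
  + y * boundary_mass r k + (if Nat.eqb (S k) (Q + r) then h r else 0).
Proof.
  unfold boundary_mass.
  destruct (Nat.leb_spec (Q + r) (S k)) as [Hle|Hlt].
  - destruct (Nat.eqb_spec (S k) (Q + r)) as [Heq|Hne].
    + destruct (Nat.leb_spec (Q + r) k); [lia|].
      replace (S k - Q - r)%nat with 0%nat by lia. rewrite boundary_sum_0.
      destruct r as [|r]; [ring|].
      destruct (Nat.leb_spec (Q + r) k); [|lia].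
      replace (k - Q - r)%nat with 0%nat by lia. ring.
    + destruct (Nat.leb_spec (Q + r) k); [|lia].
      replace (S k - Q - r)%nat with (S (k - Q - r)) by lia. rewrite boundary_sum_succ.
      destruct r as [|r]; [cbn [pow]; ring|].
      destruct (Nat.leb_spec (Q + r) k); [|lia].
      replace (k - Q - r)%nat with (S (k - Q - S r)) by lia. cbn [pow]. ring.
  - destruct (Nat.leb_spec (Q + r) k), (Nat.eqb_spec (S k) (Q + r)); try lia.
    destruct r as [|r]; [ring|].
    destruct (Nat.leb_spec (Q + r) k); [lia|ring].
Qed.

End BoundaryMass.

(** * The inventory chain *)

Ltac destruct_eqb :=
  repeat match goal with |- context [Nat.eqb ?a ?b] => destruct (Nat.eqb_spec a b) end.

Lemma rate_swap l1 l2 p12 p21 i1 i2 j1 j2 :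
  rate l2 l1 p21 p12 i2 i1 j2 j1 = rate l1 l2 p12 p21 i1 i2 j1 j2.
Proof. unfold rate. destruct i1, i2; cbn [andb]; destruct_eqb; cbn; lia || reflexivity. Qed.

Lemma transient_distribution_swap Q1 Q2 l1 l2 p12 p21 p :
  is_transient_distribution Q1 Q2 l1 l2 p12 p21 p ->
  is_transient_distribution Q2 Q1 l2 l1 p21 p12 (fun j2 j1 => p j1 j2).
Proof.
  intros [Hp0 [Hcont Hderiv]]. split; [|split].
  - intros j2 j1 Hj2 Hj1. rewrite andb_comm. apply Hp0; assumption.
  - intros j2 j1 Hj2 Hj1. apply Hcont; assumption.
  - intros j2 j1 Hj2 Hj1 t Ht. unfold out_rate.
    rewrite (state_sum_ext _ _ (fun i2 i1 => p i1 i2 t * rate l2 l1 p21 p12 i2 i1 j2 j1)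
      (fun i2 i1 => p i1 i2 t * rate l1 l2 p12 p21 i1 i2 j1 j2))
      by (intros; rewrite rate_swap; reflexivity).
    rewrite (state_sum_ext _ _ (fun i2 i1 => rate l2 l1 p21 p12 j2 j1 i2 i1)
      (fun i2 i1 => rate l1 l2 p12 p21 j1 j2 i1 i2)) by (intros; apply rate_swap).
    rewrite !(state_sum_transpose Q1 Q2). apply Hderiv; assumption.
Qed.

Section InventoryChain.
Variables (Q1 Q2 : nat) (l1 l2 p12 p21 : R).
Hypotheses (hl1 : 0 < l1) (hl2 : 0 < l2) (hp12 : 0 <= p12 <= 1) (hp21 : 0 <= p21 <= 1).

Local Notation s := (l1 + l2).
Local Notation s1 := (l1 + l2 * p21).
Local Notation s2 := (l2 + l1 * p12).
Local Notation q := (rate l1 l2 p12 p21).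
Local Notation dist := (jump_dist Q1 Q2 q s).

Lemma total_rate_pos : 0 < s.
Proof. lra. Qed.

Lemma rate_ge0 i1 i2 j1 j2 : 0 <= q i1 i2 j1 j2.
Proof.
  assert (0 <= s1) by nra. assert (0 <= s2) by nra.
  unfold rate. destruct i1, i2; destruct_eqb; cbn; lra.
Qed.

Lemma rate_support i1 i2 j1 j2 :
  q i1 i2 j1 j2 <> 0 -> (j1 <= i1)%nat /\ (j2 <= i2)%nat /\ (j1 + j2 < i1 + i2)%nat.
Proof. unfold rate. destruct i1, i2; destruct_eqb; cbn; intros; lia || lra. Qed.

Lemma rate_from_interior a1 a2 j1 j2 :
  q (S a1) (S a2) j1 j2 = (if Nat.eqb j1 a1 && Nat.eqb j2 (S a2) then l1 else 0)
                        + (if Nat.eqb j1 (S a1) && Nat.eqb j2 a2 then l2 else 0).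
Proof. unfold rate. destruct_eqb; cbn; lia || lra. Qed.

Lemma rate_into_interior i1 i2 j1 j2 : (1 <= j1)%nat -> (1 <= j2)%nat ->
  q i1 i2 j1 j2 = (if Nat.eqb i1 (S j1) && Nat.eqb i2 j2 then l1 else 0)
                + (if Nat.eqb i1 j1 && Nat.eqb i2 (S j2) then l2 else 0).
Proof. intros. unfold rate. destruct i1, i2; destruct_eqb; cbn; lia || lra. Qed.

Lemma rate_into_axis i1 i2 j1 : (1 <= j1)%nat ->
  q i1 i2 j1 0 = (if Nat.eqb i1 (S j1) && Nat.eqb i2 0 then s1 else 0)
               + (if Nat.eqb i1 j1 && Nat.eqb i2 1 then l2 else 0).
Proof. intros. unfold rate. destruct i1, i2; destruct_eqb; cbn; lia || lra. Qed.

Lemma exit_rate_interior a1 a2 : (S a1 <= Q1)%nat -> (S a2 <= Q2)%nat ->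
  state_sum Q1 Q2 (q (S a1) (S a2)) = s.
Proof.
  intros Ha1 Ha2. rewrite (state_sum_ext _ _ _ _ (fun j1 j2 _ _ => rate_from_interior a1 a2 j1 j2)).
  rewrite state_sum_plus, (state_sum_indicator _ _ (fun _ _ => l1)),
    (state_sum_indicator _ _ (fun _ _ => l2)).
  destruct (Nat.leb_spec a1 Q1), (Nat.leb_spec (S a2) Q2), (Nat.leb_spec (S a1) Q1),
    (Nat.leb_spec a2 Q2); cbn; lia || reflexivity.
Qed.

Lemma exit_rate_axis a1 : (S a1 <= Q1)%nat -> state_sum Q1 Q2 (q (S a1) 0) = s1.
Proof.
  intros Ha1. unfold rate. rewrite (state_sum_indicator _ _ (fun _ _ => s1)).
  destruct (Nat.leb_spec a1 Q1), (Nat.leb_spec 0 Q2); cbn; lia || reflexivity.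
Qed.

Lemma exit_rate_le i1 i2 : (i1 <= Q1)%nat -> (i2 <= Q2)%nat -> state_sum Q1 Q2 (q i1 i2) <= s.
Proof.
  intros Hi1 Hi2. destruct i1 as [|a1], i2 as [|a2].
  - replace (state_sum Q1 Q2 (q 0 0)) with (state_sum Q1 Q2 (fun _ _ => 1) * 0); [lra|].
    rewrite <- state_sum_mult_r. apply state_sum_ext. intros. cbn. ring.
  - unfold rate. rewrite (state_sum_indicator _ _ (fun _ _ => s2)).
    destruct (_ && _); nra.
  - rewrite exit_rate_axis by assumption. nra.
  - rewrite exit_rate_interior by assumption. lra.
Qed.

Lemma dist_outside k j1 j2 : (Q1 < j1 \/ Q2 < j2)%nat -> dist k j1 j2 = 0.
Proof.
  intros Hj. apply jump_dist_outside; [|exact Hj]. intros i1 i2 Hi1 Hi2.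
  destruct (Req_dec (q i1 i2 j1 j2) 0) as [|Hq]; [assumption|].
  apply rate_support in Hq. lia.
Qed.

Lemma state_sum_dist_inflow k j1 j2 a b c d x y :
  (forall i1 i2, q i1 i2 j1 j2 = (if Nat.eqb i1 a && Nat.eqb i2 b then x else 0)
                               + (if Nat.eqb i1 c && Nat.eqb i2 d then y else 0)) ->
  state_sum Q1 Q2 (fun i1 i2 => dist k i1 i2 * q i1 i2 j1 j2) = dist k a b * x + dist k c d * y.
Proof.
  intros Hq.
  rewrite (state_sum_ext _ _ _
    (fun i1 i2 => (if Nat.eqb i1 a && Nat.eqb i2 b then dist k i1 i2 * x else 0)
                + (if Nat.eqb i1 c && Nat.eqb i2 d then dist k i1 i2 * y else 0)))
    by (intros; rewrite Hq; destruct (_ && _), (_ && _); ring).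
  rewrite state_sum_plus, !state_sum_indicator.
  destruct (Nat.leb_spec a Q1), (Nat.leb_spec b Q2), (Nat.leb_spec c Q1), (Nat.leb_spec d Q2);
    cbn [andb];
    repeat match goal with |- context [dist k ?u ?v] => rewrite (dist_outside k u v) by lia end;
    ring.
Qed.

Lemma dist_interior_step k j1 j2 : (1 <= j1 <= Q1)%nat -> (1 <= j2 <= Q2)%nat ->
  dist (S k) j1 j2 = l1 / s * dist k (S j1) j2 + l2 / s * dist k j1 (S j2).
Proof.
  intros Hj1 Hj2. cbn [jump_dist].
  rewrite state_sum_jump_prob by (lra || lia).
  rewrite (state_sum_dist_inflow _ _ _ _ _ _ _ _ _ (fun i1 i2 => rate_into_interior i1 i2 j1 j2
    ltac:(lia) ltac:(lia))).
  destruct j1 as [|a1], j2 as [|a2]; try lia.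
  rewrite exit_rate_interior by lia. field. lra.
Qed.

Lemma dist_axis_step k j1 : (1 <= j1 <= Q1)%nat ->
  dist (S k) j1 0 = s1 / s * dist k (S j1) 0 + l2 / s * dist k j1 1 + (s - s1) / s * dist k j1 0.
Proof.
  intros Hj1. cbn [jump_dist].
  rewrite state_sum_jump_prob by (lra || lia).
  rewrite (state_sum_dist_inflow _ _ _ _ _ _ _ _ _ (fun i1 i2 => rate_into_axis i1 i2 j1
    ltac:(lia))).
  destruct j1 as [|a1]; try lia.
  rewrite exit_rate_axis by lia. field. lra.
Qed.

Lemma dist_interior k j1 j2 : (1 <= j1 <= Q1)%nat -> (1 <= j2 <= Q2)%nat ->
  dist k j1 j2 = binomial_mass (l1 / s) (l2 / s) (Q1 - j1) (Q2 - j2) k.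
Proof.
  revert j1 j2. induction k as [|k IH]; intros j1 j2 Hj1 Hj2.
  - cbn [jump_dist]. unfold binomial_mass.
    destruct (Nat.eqb_spec j1 Q1), (Nat.eqb_spec j2 Q2), (Nat.eqb_spec 0 (Q1 - j1 + (Q2 - j2)));
      cbn [andb]; try lia; try reflexivity.
    subst. rewrite !Nat.sub_diag. cbn. rewrite C_n_n. ring.
  - rewrite dist_interior_step, binomial_mass_succ by assumption.
    assert (Hleft : dist k (S j1) j2 =
      match (Q1 - j1)%nat with O => 0 | S A => binomial_mass (l1 / s) (l2 / s) A (Q2 - j2) k end).
    { destruct (Nat.eq_dec j1 Q1) as [->|Hne].
      - rewrite Nat.sub_diag. apply dist_outside. lia.
      - replace (Q1 - j1)%nat with (S (Q1 - S j1)) by lia. apply IH; lia. }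
    assert (Hdown : dist k j1 (S j2) =
      match (Q2 - j2)%nat with O => 0 | S B => binomial_mass (l1 / s) (l2 / s) (Q1 - j1) B k end).
    { destruct (Nat.eq_dec j2 Q2) as [->|Hne].
      - rewrite Nat.sub_diag. apply dist_outside. lia.
      - replace (Q2 - j2)%nat with (S (Q2 - S j2)) by lia. apply IH; lia. }
    rewrite Hleft, Hdown. destruct (Q1 - j1)%nat, (Q2 - j2)%nat; ring.
Qed.

Hypothesis hQ2 : (1 <= Q2)%nat.

(* Probability that the jump chain enters the axis [j2 = 0] at [(Q1 - i, 0)], which happens
   at step [Q2 + i] (a negative binomial weight). *)
Definition axis_entry (i : nat) : R :=
  l2 / s * (C (i + (Q2 - 1)) i * (l1 / s) ^ i * (l2 / s) ^ (Q2 - 1)).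

Lemma dist_axis k j1 : (1 <= j1 <= Q1)%nat ->
  dist k j1 0 = boundary_mass (s1 / s) ((s - s1) / s) axis_entry Q2 (Q1 - j1) k.
Proof.
  revert j1. induction k as [|k IH]; intros j1 Hj1.
  - cbn [jump_dist]. unfold boundary_mass.
    destruct (Nat.eqb_spec 0 Q2), (Nat.leb_spec (Q2 + (Q1 - j1)) 0); try lia.
    rewrite andb_false_r. reflexivity.
  - rewrite dist_axis_step, boundary_mass_succ by assumption.
    assert (Hleft : dist k (S j1) 0 = match (Q1 - j1)%nat with
        O => 0 | S r => boundary_mass (s1 / s) ((s - s1) / s) axis_entry Q2 r k end).
    { destruct (Nat.eq_dec j1 Q1) as [->|Hne].
      - rewrite Nat.sub_diag. apply dist_outside. lia.
      - replace (Q1 - j1)%nat with (S (Q1 - S j1)) by lia. apply IH; lia. }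
    assert (Hentry : l2 / s * dist k j1 1 =
      if Nat.eqb (S k) (Q2 + (Q1 - j1)) then axis_entry (Q1 - j1) else 0).
    { replace 1%nat with (Q2 - (Q2 - 1))%nat at 1 by lia.
      rewrite dist_interior by lia. unfold binomial_mass, axis_entry.
      replace (Q2 - (Q2 - 1))%nat with 1%nat by lia.
      destruct (Nat.eqb_spec k (Q1 - j1 + (Q2 - 1))), (Nat.eqb_spec (S k) (Q2 + (Q1 - j1)));
        lia || ring. }
    rewrite Hleft, IH, <- Hentry by assumption. destruct (Q1 - j1)%nat; ring.
Qed.

Lemma axis_entry_series_term m j1 : (1 <= j1 <= Q1)%nat ->
  let M := (Q1 + Q2 - j1)%nat in
  boundary_mass (s1 / s) ((s - s1) / s) axis_entry Q2 (Q1 - j1) (m + M) =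
  sum_f_R0 (fun i => let l := (i + Q2)%nat in
    C (l - 1) (Q2 - 1) * (l2 / s) ^ Q2 * (l1 / s) ^ (l - Q2)
    * C (m + M - l) (M - l) * (s1 / s) ^ (M - l) * ((s - s1) / s) ^ (m + M - M)) (M - Q2).
Proof.
  intros Hj1 M. unfold boundary_mass, boundary_sum, M.
  destruct (Nat.leb_spec (Q2 + (Q1 - j1)) (m + (Q1 + Q2 - j1))) as [_|]; [|lia].
  replace (m + (Q1 + Q2 - j1) - Q2 - (Q1 - j1))%nat with m by lia.
  replace (m + (Q1 + Q2 - j1) - (Q1 + Q2 - j1))%nat with m by lia.
  replace (Q1 + Q2 - j1 - Q2)%nat with (Q1 - j1)%nat by lia.
  rewrite (Rmult_comm (sum_f_R0 _ _)), scal_sum. apply sum_eq. intros i Hi. cbv zeta.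
  unfold axis_entry.
  replace (i + Q2 - 1)%nat with (i + (Q2 - 1))%nat by lia.
  rewrite (pascal_step1 (i + (Q2 - 1)) (Q2 - 1)) by lia.
  replace (i + (Q2 - 1) - (Q2 - 1))%nat with i by lia.
  replace (i + Q2 - Q2)%nat with i by lia.
  replace (m + (Q1 + Q2 - j1) - (i + Q2))%nat with (m + (Q1 - j1 - i))%nat by lia.
  replace (Q1 + Q2 - j1 - (i + Q2))%nat with (Q1 - j1 - i)%nat by lia.
  replace ((l2 / s) ^ Q2) with (l2 / s * (l2 / s) ^ (Q2 - 1))
    by (rewrite tech_pow_Rmult; f_equal; lia).
  ring.
Qed.

Variable p : nat -> nat -> R -> R.
Hypothesis hp : is_transient_distribution Q1 Q2 l1 l2 p12 p21 p.

Lemma transient_uniformized j1 j2 t : (j1 <= Q1)%nat -> (j2 <= Q2)%nat -> 0 <= t ->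
  p j1 j2 t = uniformized Q1 Q2 q s j1 j2 t.
Proof.
  intros Hj1 Hj2 Ht.
  apply (forward_solution_uniformized Q1 Q2 q s total_rate_pos rate_ge0 exit_rate_le);
    try assumption.
  intros i1 i2 k1 k2 Hq. apply rate_support in Hq. lia.
Qed.

Lemma transient_interior t : 0 <= t ->
  forall j1 j2, (1 <= j1 <= Q1)%nat -> (1 <= j2 <= Q2)%nat ->
  let N := (Q1 + Q2 - j1 - j2)%nat in
  p j1 j2 t = exp (- (s * t)) * (s * t) ^ N / INR (fact N)
              * C N (Q1 - j1) * (l1 / s) ^ (Q1 - j1) * (l2 / s) ^ (Q2 - j2).
Proof.
  intros Ht j1 j2 Hj1 Hj2 N.
  rewrite transient_uniformized by (lia || lra).
  pose proof (uniformized_series Q1 Q2 q s total_rate_pos rate_ge0 exit_rate_le j1 j2 t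
    ltac:(lia) ltac:(lia)) as Hseries.
  rewrite (is_series_single_term _ _ N Hseries); [|intros n Hn];
    rewrite dist_interior by assumption; unfold binomial_mass;
    replace (Q1 - j1 + (Q2 - j2))%nat with N by (unfold N; lia).
  - rewrite Nat.eqb_refl. ring.
  - destruct (Nat.eqb_spec n N); [contradiction|ring].
Qed.

Lemma transient_axis t : 0 <= t ->
  forall j1, (1 <= j1 <= Q1)%nat ->
  let M := (Q1 + Q2 - j1)%nat in
  infinite_sum
    (fun m => let k := (m + M)%nat in
       exp (- (s * t)) * (s * t) ^ k / INR (fact k) *
       sum_f_R0 (fun i => let l := (i + Q2)%nat in
           C (l - 1) (Q2 - 1) * (l2 / s) ^ Q2 * (l1 / s) ^ (l - Q2)
           * C (k - l) (M - l) * (s1 / s) ^ (M - l)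
           * ((s - s1) / s) ^ (k - M)) (M - Q2))
    (p j1 0%nat t).
Proof.
  intros Ht j1 Hj1 M. apply is_series_Reals.
  rewrite transient_uniformized by (lia || lra).
  pose proof (uniformized_series Q1 Q2 q s total_rate_pos rate_ge0 exit_rate_le j1 0 t
    ltac:(lia) ltac:(lia)) as Hseries.
  apply is_series_drop_zeros with (M := M) in Hseries.
  - eapply is_series_ext; [|exact Hseries]. intros m. cbv beta zeta.
    rewrite dist_axis, axis_entry_series_term by assumption. reflexivity.
  - intros n Hn. rewrite dist_axis by assumption. unfold boundary_mass.
    destruct (Nat.leb_spec (Q2 + (Q1 - j1)) n); [unfold M in Hn; lia|ring].
Qed.

Lemma transient_empty t : 0 <= t ->
  p 0%nat 0%nat t =
    1 - state_sum Q1 Q2 (fun j1 j2 => if Nat.eqb j1 0 && Nat.eqb j2 0 then 0 else p j1 j2 t).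
Proof.
  intros Ht.
  assert (Htotal : state_sum Q1 Q2 (fun j1 j2 => p j1 j2 t) = 1).
  { rewrite <- (uniformized_total Q1 Q2 q s total_rate_pos rate_ge0 exit_rate_le t).
    apply state_sum_ext. intros. apply transient_uniformized; assumption. }
  rewrite (state_sum_ext _ _ _
    (fun j1 j2 => (if Nat.eqb j1 0 && Nat.eqb j2 0 then 0 else p j1 j2 t)
                  + (if Nat.eqb j1 0 && Nat.eqb j2 0 then p j1 j2 t else 0)))
    in Htotal by (intros; destruct (_ && _); ring).
  rewrite state_sum_plus, state_sum_indicator in Htotal. cbn in Htotal. lra.
Qed.

End InventoryChain.

Theorem theorem1 (Q1 Q2 : nat) (l1 l2 p12 p21 : R)
  (p : nat -> nat -> R -> R)
  (hQ1 : (1 <= Q1)%nat) (hQ2 : (1 <= Q2)%nat)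
  (hl1 : 0 < l1) (hl2 : 0 < l2)
  (hp12 : 0 <= p12 <= 1) (hp21 : 0 <= p21 <= 1)
  (hp : is_transient_distribution Q1 Q2 l1 l2 p12 p21 p) :
  let s := l1 + l2 in
  let s1 := l1 + l2 * p21 in
  let s2 := l2 + l1 * p12 in
  forall t, 0 <= t ->
  (* (a) *)
  (forall j1 j2, (1 <= j1 <= Q1)%nat -> (1 <= j2 <= Q2)%nat ->
     let N := (Q1 + Q2 - j1 - j2)%nat in
     p j1 j2 t = exp (- (s * t)) * (s * t) ^ N / INR (fact N)
                 * C N (Q1 - j1) * (l1 / s) ^ (Q1 - j1) * (l2 / s) ^ (Q2 - j2)) /\
  (* (b) *)
  (forall j1, (1 <= j1 <= Q1)%nat ->
     let M := (Q1 + Q2 - j1)%nat in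
     infinite_sum
       (fun m => let k := (m + M)%nat in
          exp (- (s * t)) * (s * t) ^ k / INR (fact k) *
          sum_f_R0 (fun i => let l := (i + Q2)%nat in
              C (l - 1) (Q2 - 1) * (l2 / s) ^ Q2 * (l1 / s) ^ (l - Q2)
              * C (k - l) (M - l) * (s1 / s) ^ (M - l)
              * ((s - s1) / s) ^ (k - M)) (M - Q2))
       (p j1 0%nat t)) /\
  (* (c) *)
  (forall j2, (1 <= j2 <= Q2)%nat ->
     let M := (Q1 + Q2 - j2)%nat in
     infinite_sum
       (fun m => let k := (m + M)%nat in
          exp (- (s * t)) * (s * t) ^ k / INR (fact k) *
          sum_f_R0 (fun i => let l := (i + Q1)%nat in
              C (l - 1) (Q1 - 1) * (l1 / s) ^ Q1 * (l2 / s) ^ (l - Q1)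
              * C (k - l) (M - l) * (s2 / s) ^ (M - l)
              * ((s - s2) / s) ^ (k - M)) (M - Q1))
       (p 0%nat j2 t)) /\
  (* (d) *)
  p 0%nat 0%nat t =
    1 - state_sum Q1 Q2 (fun j1 j2 =>
          if Nat.eqb j1 0 && Nat.eqb j2 0 then 0 else p j1 j2 t).
Proof.
  intros s s1 s2 t Ht. split; [|split; [|split]].
  - exact (transient_interior Q1 Q2 l1 l2 p12 p21 hl1 hl2 hp12 hp21 hQ2 p hp t Ht).
  - exact (transient_axis Q1 Q2 l1 l2 p12 p21 hl1 hl2 hp12 hp21 hQ2 p hp t Ht).
  - pose proof (transient_axis Q2 Q1 l2 l1 p21 p12 hl2 hl1 hp21 hp12 hQ1 _
      (transient_distribution_swap Q1 Q2 l1 l2 p12 p21 p hp) t Ht) as Hswap.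
    cbv zeta in Hswap |- *. rewrite (Rplus_comm l2 l1), (Nat.add_comm Q2 Q1) in Hswap.
    exact Hswap.
  - exact (transient_empty Q1 Q2 l1 l2 p12 p21 hl1 hl2 hp12 hp21 hQ2 p hp t Ht).
Qed.
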